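(* Let $f:\Omega_D\to\mathbb{O}$ be the $O(3)$-slice function induced by an $O(3)$-stem function $\mathcal F:E\to\mathbb{O}^4$ of class $C^1$. Then $f$ is slice Fueter-regular if and only if there exists at least one $\mathbb{I}=(I,J)\in\mathcal N$ such that $\overline{\mathcal D}_{\mathbb I}f=0$ on $\Omega_{\mathbb I}$.
   Context: Octonions $\mathbb{O}=\mathbb{H}+\ell\mathbb{H}$ (product $(a+\ell b)(c+\ell d)=(ac-d\bar b)+\ell(\bar a d+cb)$), identified with $\mathbb{R}^8$; $\mathbb{S}=\{I:I^2=-1\}$. $D\subset\mathbb{R}^2$ non-empty open, invariant under $(x_0,x_1)\mapsto(x_0,-x_1)$, $\Omega_D=\{x_0+x_1I:(x_0,x_1)\in D,I\in\mathbb{S}\}$, assumed connected; $E=\{(x_0,\dots,x_3)\in\mathbb{R}^4:(x_0,(x_1^2+x_2^2+x_3^2)^{1/2})\in D\}$. $O(3)$: real orthogonal $4\times4$ matrices fixing the first basis vector, acting on $\mathbb{R}^4$, $\mathbb{O}^4$ by matrix–column multiplication. $\mathcal N=\{(I,J)\in\mathbb{S}^2:I\perp J\}$. An $O(3)$-stem function is $\mathcal F=(\mathcal F_0,\dots,\mathcal F_3):E\to\mathbb{O}^4$ with $\mathcal F(Av)=A\mathcal F(v)$; it induces the well-defined function $f(x_0+x_1I+x_2J+x_3(IJ))=\mathcal F_0(v)+I\mathcal F_1(v)+J\mathcal F_2(v)+(IJ)\mathcal F_3(v)$ ($v=(x_0,\dots,x_3)\in E$, $(I,J)\in\mathcal N$).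 $f$ is slice Fueter-regular if it is induced by such an $\mathcal F$ of class $C^1$ satisfying on $E$: $\partial_0\mathcal F_0-\partial_1\mathcal F_1-\partial_2\mathcal F_2-\partial_3\mathcal F_3=0$, $\partial_1\mathcal F_0+\partial_0\mathcal F_1-\partial_3\mathcal F_2+\partial_2\mathcal F_3=0$, $\partial_2\mathcal F_0+\partial_3\mathcal F_1+\partial_0\mathcal F_2-\partial_1\mathcal F_3=0$, $\partial_3\mathcal F_0-\partial_2\mathcal F_1+\partial_1\mathcal F_2+\partial_0\mathcal F_3=0$. For $\mathbb I=(I,J)\in\mathcal N$: $\mathbb{H}_{\mathbb I}=\mathrm{Span}_{\mathbb{R}}(1,I,J,IJ)$, $\Omega_{\mathbb I}=\Omega_D\cap\mathbb{H}_{\mathbb I}$, $f_{\mathbb I}(v)=f(x_0+x_1I+x_2J+x_3IJ)$ for $v\in E$, and $\overline{\mathcal D}_{\mathbb I}f(x)=\frac{\partial f_{\mathbb I}}{\partial x_0}(v)+I\frac{\partial f_{\mathbb I}}{\partial x_1}(v)+J\frac{\partial f_{\mathbb I}}{\partial x_2}(v)+(IJ)\frac{\partial f_{\mathbb I}}{\partial x_3}(v)$ where $x=x_0+x_1I+x_2J+x_3IJ$. *)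

From HB Require Import structures.
From mathcomp Require Import all_boot all_order all_algebra.
From mathcomp Require Import all_classical all_reals all_analysis.
Set Implicit Arguments. Unset Strict Implicit. Unset Printing Implicit Defensive.
Import Order.TTheory GRing.Theory Num.Theory.
Import numFieldNormedType.Exports.
Local Open Scope classical_set_scope.
Local Open Scope ring_scope.

Section Octonions.
Variable R : realType.

Definition i0 : 'I_4 := @Ordinal 4 0 isT.
Definition i1 : 'I_4 := @Ordinal 4 1 isT.
Definition i2 : 'I_4 := @Ordinal 4 2 isT.
Definition i3 : 'I_4 := @Ordinal 4 3 isT.

(* Quaternions H = R^4 as row vectors, basis 1, i, j, k *)
Definition quat := 'rV[R]_4.
Definition mkq (a b c d : R) : quat := \row_(k < 4) [:: a; b; c; d]`_k.
Definition qc (p : quat) (k : 'I_4) : R := p ord0 k.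
Definition qmul (p q : quat) : quat :=
  mkq (qc p i0 * qc q i0 - qc p i1 * qc q i1 - qc p i2 * qc q i2 - qc p i3 * qc q i3)
      (qc p i0 * qc q i1 + qc p i1 * qc q i0 + qc p i2 * qc q i3 - qc p i3 * qc q i2)
      (qc p i0 * qc q i2 - qc p i1 * qc q i3 + qc p i2 * qc q i0 + qc p i3 * qc q i1)
      (qc p i0 * qc q i3 + qc p i1 * qc q i2 - qc p i2 * qc q i1 + qc p i3 * qc q i0).
Definition qconj (p : quat) : quat := mkq (qc p i0) (- qc p i1) (- qc p i2) (- qc p i3).

(* Octonions O = H + l H identified with R^8 = 'rV_8: the first four
   coordinates are the quaternion a, the last four the quaternion b of a + l b *)
Definition oct := 'rV[R]_8.
Definition opart1 (x : oct) : quat := @lsubmx R 1 4 4 x.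
Definition opart2 (x : oct) : quat := @rsubmx R 1 4 4 x.
Definition mko (a b : quat) : oct := @row_mx R 1 4 4 a b.
(* (a + l b)(c + l d) = (ac - d conj(b)) + l (conj(a) d + c b) *)
Definition omul (x y : oct) : oct :=
  mko (qmul (opart1 x) (opart1 y) - qmul (opart2 y) (qconj (opart2 x)))
      (qmul (qconj (opart1 x)) (opart2 y) + qmul (opart1 y) (opart2 x)).
Definition oone : oct := mko (mkq 1 0 0 0) 0.

Definition odot (x y : oct) : R := \sum_(k < 8) x ord0 k * y ord0 k.

Definition Ssph : set oct := [set I | omul I I = - oone].
Definition Npairs (I J : oct) : Prop := Ssph I /\ Ssph J /\ odot I J = 0.

Definition OmegaD (D : set (R * R)) : set oct :=
  [set x | exists a b I, D (a, b) /\ Ssph I /\ x = a *: oone + b *: I].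

Definition vc (v : 'cV[R]_4) (k : 'I_4) : R := v k ord0.

Definition Eset (D : set (R * R)) : set 'cV[R]_4 :=
  [set v | D (vc v i0, Num.sqrt (vc v i1 ^+ 2 + vc v i2 ^+ 2 + vc v i3 ^+ 2))].

Definition e4 (k : 'I_4) : 'cV[R]_4 := delta_mx k ord0.
Definition isO3 (A : 'M[R]_4) : Prop := A^T *m A = 1%:M /\ A *m e4 i0 = e4 i0.

Definition emb (I J : oct) (v : 'cV[R]_4) : oct :=
  vc v i0 *: oone + vc v i1 *: I + vc v i2 *: J + vc v i3 *: omul I J.

Definition pd (V : normedModType R) (k : 'I_4) (G : 'cV[R]_4 -> V) (v : 'cV[R]_4) : V :=
  'D_(e4 k) G v.

(* An element of O^4 is a 4x8 real matrix whose k-th row is the k-th octonion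
   component; the matrix A acts on O^4 by matrix-column multiplication A *m _. *)
Definition Fc (F : 'cV[R]_4 -> 'M[R]_(4, 8)) (k : 'I_4) (v : 'cV[R]_4) : oct := row k (F v).

Definition stem_fun (D : set (R * R)) (F : 'cV[R]_4 -> 'M[R]_(4, 8)) : Prop :=
  forall A v, isO3 A -> Eset D v -> F (A *m v) = A *m F v.

Definition C1_on (D : set (R * R)) (F : 'cV[R]_4 -> 'M[R]_(4, 8)) : Prop :=
  (forall v, Eset D v -> differentiable F v) /\
  (forall k v, Eset D v -> {for v, continuous (pd k F)}).

Definition induces (D : set (R * R)) (F : 'cV[R]_4 -> 'M[R]_(4, 8)) (f : oct -> oct) : Prop :=
  forall I J v, Npairs I J -> Eset D v ->
    f (emb I J v) = Fc F i0 v + omul I (Fc F i1 v) + omul J (Fc F i2 v)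
                    + omul (omul I J) (Fc F i3 v).

Definition fueter_system (D : set (R * R)) (F : 'cV[R]_4 -> 'M[R]_(4, 8)) : Prop :=
  forall v, Eset D v ->
    let d a b := row b (pd a F v) in
    d i0 i0 - d i1 i1 - d i2 i2 - d i3 i3 = 0 /\
    d i1 i0 + d i0 i1 - d i3 i2 + d i2 i3 = 0 /\
    d i2 i0 + d i3 i1 + d i0 i2 - d i1 i3 = 0 /\
    d i3 i0 - d i2 i1 + d i1 i2 + d i0 i3 = 0.

Definition slice_fueter_regular (D : set (R * R)) (f : oct -> oct) : Prop :=
  exists F, stem_fun D F /\ C1_on D F /\ induces D F f /\ fueter_system D F.

Definition fI (I J : oct) (f : oct -> oct) (v : 'cV[R]_4) : oct := f (emb I J v).
Definition Dbar (I J : oct) (f : oct -> oct) (v : 'cV[R]_4) : oct :=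
  pd i0 (fI I J f) v + omul I (pd i1 (fI I J f) v) + omul J (pd i2 (fI I J f) v)
  + omul (omul I J) (pd i3 (fI I J f) v).

End Octonions.

(* Write d a b for the partial derivative of the stem component F_b along x_a, and let
   K = IJ for an orthonormal pair (I, J) of imaginary units.  Left alternativity of the
   octonions gives I(Ix) = -x, and Y(Xz) = -X(Yz) for anticommuting X, Y among I, J, K;
   this collapses the sixteen terms of Dbar_I f into seven brackets
     (d00 - d11 - d22 - d33) + I(d10 + d01) + J(d20 + d02) + K(d30 + d03)
       + I(J(d12 - d21)) + I(K(d13 - d31)) + J(K(d23 - d32)).
   Equivariance of F under the reflection diag(1, s1, s2, s3) of O(3) multiplies d a b
   by s_a s_b at the reflected point.  So if Dbar_I f vanishes on Omega_I, evaluating it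
   at the eight reflections of a point separates the brackets; all of them vanish, and
   they imply the Fueter system.  Conversely, the Fueter system at v and at
   diag(1, -1, -1, -1) v already forces the seven brackets to vanish, so Dbar_I f = 0
   for every pair (I, J). *)

From HB Require Import structures.
From mathcomp Require Import all_boot all_order all_algebra.
From mathcomp Require Import all_classical all_reals all_analysis.
From mathcomp Require Import ring lra.
Import Order.TTheory GRing.Theory Num.Theory.
Import numFieldNormedType.Exports.
Local Open Scope classical_set_scope.
Local Open Scope ring_scope.
Set Implicit Arguments. Unset Strict Implicit. Unset Printing Implicit Defensive.

Section OctonionAlgebra.
Variable R : realType.
Implicit Types (x y z : oct R) (p q : quat R).

Definition ocoord x (n : nat) : R := x ord0 (inord n).
(* Otherwise the numeral in [ocoord x 2] would be read in [ring_scope] as [2%:R : nat]. *)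
Arguments ocoord x n%_N.
Definition ore x : R := ocoord x 0.

Lemma ocoordE x (k : 'I_8) : x ord0 k = ocoord x k.
Proof. by rewrite /ocoord inord_val. Qed.

Lemma ocoord_inj x y : (forall n, (n < 8)%N -> ocoord x n = ocoord y n) -> x = y.
Proof. by move=> exy; apply/rowP => k; rewrite !ocoordE exy. Qed.

Lemma ocoordD x y n : ocoord (x + y) n = ocoord x n + ocoord y n.
Proof. by rewrite /ocoord mxE. Qed.
Lemma ocoordN x n : ocoord (- x) n = - ocoord x n.
Proof. by rewrite /ocoord mxE. Qed.
Lemma ocoordZ (a : R) x n : ocoord (a *: x) n = a * ocoord x n.
Proof. by rewrite /ocoord mxE. Qed.
Lemma ocoord0 n : ocoord 0 n = 0.
Proof. by rewrite /ocoord mxE. Qed.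

Lemma ocoord_mko p q n : (n < 8)%N ->
  ocoord (mko p q) n = if (n < 4)%N then qc p (inord n) else qc q (inord (n - 4)).
Proof.
move=> n8; rewrite /ocoord /mko mxE; case: splitP => j /=; rewrite inordK // => ->.
  by rewrite ltn_ord inord_val.
by rewrite ltnNge leq_addr /= addKn inord_val.
Qed.

Lemma qc_mkq (a b c d : R) (i : 'I_4) : qc (mkq a b c d) i = [:: a; b; c; d]`_i.
Proof. by rewrite /qc mxE. Qed.
Lemma qc_opart1 x (i : 'I_4) : qc (opart1 x) i = ocoord x i.
Proof. by rewrite /qc mxE ocoordE. Qed.
Lemma qc_opart2 x (i : 'I_4) : qc (opart2 x) i = ocoord x i.+4.
Proof. by rewrite /qc mxE ocoordE. Qed.
Lemma qcD p q i : qc (p + q) i = qc p i + qc q i.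
Proof. by rewrite /qc mxE. Qed.
Lemma qcN p i : qc (- p) i = - qc p i.
Proof. by rewrite /qc mxE. Qed.
Lemma qc0 i : qc 0 i = 0 :> R.
Proof. by rewrite /qc mxE. Qed.
Lemma inord4K n : (n < 4)%N -> nat_of_ord (inord n : 'I_4) = n.
Proof. exact: inordK. Qed.

(* [omul] in coordinates: the Cayley-Dickson formula expanded in the basis e_0 = 1, ..., e_7. *)
Definition omul_coord (n : nat) x y : R :=
  match n with
  | 0 => ocoord x 0 * ocoord y 0 - ocoord x 1 * ocoord y 1 - ocoord x 2 * ocoord y 2 - ocoord x 3 * ocoord y 3
        - ocoord x 4 * ocoord y 4 - ocoord x 5 * ocoord y 5 - ocoord x 6 * ocoord y 6 - ocoord x 7 * ocoord y 7
  | 1 => ocoord x 0 * ocoord y 1 + ocoord x 1 * ocoord y 0 + ocoord x 2 * ocoord y 3 - ocoord x 3 * ocoord y 2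
        - ocoord x 4 * ocoord y 5 + ocoord x 5 * ocoord y 4 - ocoord x 6 * ocoord y 7 + ocoord x 7 * ocoord y 6
  | 2 => ocoord x 0 * ocoord y 2 - ocoord x 1 * ocoord y 3 + ocoord x 2 * ocoord y 0 + ocoord x 3 * ocoord y 1
        - ocoord x 4 * ocoord y 6 + ocoord x 5 * ocoord y 7 + ocoord x 6 * ocoord y 4 - ocoord x 7 * ocoord y 5
  | 3 => ocoord x 0 * ocoord y 3 + ocoord x 1 * ocoord y 2 - ocoord x 2 * ocoord y 1 + ocoord x 3 * ocoord y 0
        - ocoord x 4 * ocoord y 7 - ocoord x 5 * ocoord y 6 + ocoord x 6 * ocoord y 5 + ocoord x 7 * ocoord y 4
  | 4 => ocoord x 0 * ocoord y 4 + ocoord x 1 * ocoord y 5 + ocoord x 2 * ocoord y 6 + ocoord x 3 * ocoord y 7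
        + ocoord x 4 * ocoord y 0 - ocoord x 5 * ocoord y 1 - ocoord x 6 * ocoord y 2 - ocoord x 7 * ocoord y 3
  | 5 => ocoord x 0 * ocoord y 5 - ocoord x 1 * ocoord y 4 - ocoord x 2 * ocoord y 7 + ocoord x 3 * ocoord y 6
        + ocoord x 4 * ocoord y 1 + ocoord x 5 * ocoord y 0 - ocoord x 6 * ocoord y 3 + ocoord x 7 * ocoord y 2
  | 6 => ocoord x 0 * ocoord y 6 + ocoord x 1 * ocoord y 7 - ocoord x 2 * ocoord y 4 - ocoord x 3 * ocoord y 5
        + ocoord x 4 * ocoord y 2 + ocoord x 5 * ocoord y 3 + ocoord x 6 * ocoord y 0 - ocoord x 7 * ocoord y 1
  | 7 => ocoord x 0 * ocoord y 7 - ocoord x 1 * ocoord y 6 + ocoord x 2 * ocoord y 5 - ocoord x 3 * ocoord y 4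
        + ocoord x 4 * ocoord y 3 - ocoord x 5 * ocoord y 2 + ocoord x 6 * ocoord y 1 + ocoord x 7 * ocoord y 0
  | _ => 0
  end.

Lemma ocoord_omul x y n : (n < 8)%N -> ocoord (omul x y) n = omul_coord n x y.
Proof.
case: n => [|[|[|[|[|[|[|[|//]]]]]]]] _;
  rewrite ocoord_mko //= /qmul /qconj !qcD ?qcN !qc_mkq inord4K //=
          !qc_opart1 !qc_opart2 /=; ring.
Qed.

Lemma ocoord_oone n : (n < 8)%N -> ocoord (oone R) n = (n == 0)%:R.
Proof.
by case: n => [|[|[|[|[|[|[|[|//]]]]]]]] _; rewrite ocoord_mko //= ?qc_mkq ?qc0 //= inord4K.
Qed.

Lemma odotE x y : odot x y = \sum_(k < 8) ocoord x k * ocoord y k.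
Proof. by apply: eq_bigr => k _; rewrite !ocoordE. Qed.

Lemma ore_oone : ore (oone R) = 1.
Proof. by rewrite /ore ocoord_oone. Qed.

Lemma oreD x y : ore (x + y) = ore x + ore y.
Proof. exact: ocoordD. Qed.

Lemma oreZ (a : R) x : ore (a *: x) = a * ore x.
Proof. exact: ocoordZ. Qed.

Ltac oct_simpl := rewrite ?ocoordD ?ocoordN ?ocoordZ ?ocoord0 ?ocoord_oone ?ocoord_omul //=.
Ltac oct_ring :=
  rewrite ?odotE ?big_ord_recr ?big_ord0 /=;
  try apply: ocoord_inj => -[|[|[|[|[|[|[|[|//]]]]]]]] _;
  rewrite /ore; do 3?oct_simpl; ring.

Lemma omulDr x y z : omul x (y + z) = omul x y + omul x z.
Proof. oct_ring. Qed.
Lemma omulDl x y z : omul (x + y) z = omul x z + omul y z.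
Proof. oct_ring. Qed.
Lemma omulZr (a : R) x y : omul x (a *: y) = a *: omul x y.
Proof. oct_ring. Qed.
Lemma omulZl (a : R) x y : omul (a *: x) y = a *: omul x y.
Proof. oct_ring. Qed.
Lemma omul1 x : omul (oone R) x = x.
Proof. oct_ring. Qed.
Lemma omul_alt x y : omul x (omul x y) = omul (omul x x) y.
Proof. oct_ring. Qed.

Lemma omul_sym x y :
  omul x y + omul y x = (2 * ore x) *: y + (2 * ore y) *: x - (2 * odot x y) *: oone R.
Proof. oct_ring. Qed.
Lemma ore_omul x y : ore (omul x y) = 2 * ore x * ore y - odot x y.
Proof. oct_ring. Qed.
Lemma odot_omull x y : odot x (omul x y) = odot x x * ore y.
Proof. oct_ring. Qed.
Lemma odot_omulr x y : odot (omul x y) y = odot y y * ore x.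
Proof. oct_ring. Qed.
Lemma odot_omul x y : odot (omul x y) (omul x y) = odot x x * odot y y.
Proof. oct_ring. Qed.

Lemma odot_oone x : odot x (oone R) = ore x.
Proof. oct_ring. Qed.

Lemma odotC x y : odot x y = odot y x.
Proof. by apply: eq_bigr => k _; rewrite mulrC. Qed.

Lemma odotNr x y : odot x (- y) = - odot x y.
Proof. by rewrite /odot -sumrN; apply: eq_bigr => k _; rewrite mxE mulrN. Qed.

Lemma odot_ge0 x : 0 <= odot x x.
Proof. by apply: sumr_ge0 => k _; rewrite -expr2 sqr_ge0. Qed.

Lemma omulNl x y : omul (- x) y = - omul x y.
Proof. by rewrite -scaleN1r omulZl scaleN1r. Qed.

Lemma omulNr x y : omul x (- y) = - omul x y.
Proof. by rewrite -scaleN1r omulZr scaleN1r. Qed.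

Lemma omul0r x : omul x 0 = 0.
Proof. by rewrite -(scale0r 0) omulZr !scale0r. Qed.

Lemma omul0l x : omul 0 x = 0.
Proof. by rewrite -(scale0r 0) omulZl !scale0r. Qed.

Lemma omul_altD x y z : omul x (omul y z) + omul y (omul x z) = omul (omul x y + omul y x) z.
Proof.
have := omul_alt (x + y) z.
rewrite !(omulDl, omulDr) omul_alt (omul_alt y) -!addrA => /addrI.
by rewrite !addrA => /addIr.
Qed.

Lemma omul_unitK x y : omul x x = - oone R -> omul x (omul x y) = - y.
Proof. by move=> xx; rewrite omul_alt xx omulNl omul1. Qed.

Lemma omul_unit_inj x y : omul x x = - oone R -> omul x y = 0 -> y = 0.
Proof. by move=> xx xy0; rewrite -[y]opprK -(omul_unitK y xx) xy0 omul0r oppr0. Qed.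

Lemma omul_anti x y z : omul x y + omul y x = 0 -> omul y (omul x z) = - omul x (omul y z).
Proof. by move=> xy; apply/eqP; rewrite -addr_eq0 addrC omul_altD xy omul0l. Qed.

Lemma omul_sym_im x y : ore x = 0 -> ore y = 0 ->
  omul x y + omul y x = - ((2 * odot x y) *: oone R).
Proof. by move=> x0 y0; rewrite omul_sym x0 y0 !mulr0 !scale0r add0r sub0r. Qed.

Lemma SsphP x : Ssph x <-> ore x = 0 /\ odot x x = 1.
Proof.
split=> [xx|[x0 x_norm]].
  have re0 : ore x = 0.
    have := odot_omull x x; rewrite xx odotNr odot_oone => /eqP.
    rewrite eq_sym -subr_eq0 opprK -{2}[ore x]mul1r -mulrDl mulf_eq0 => /orP[/eqP|/eqP//].
    by have := odot_ge0 x; lra.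
  split=> //; have := ore_omul x x.
  by rewrite xx re0 /ore ocoordN ocoord_oone // mulr0 sub0r => /oppr_inj.
have := omul_sym_im x0 x0; rewrite x_norm mulr1 /Ssph /= => xx2.
by apply/rowP => k; move/rowP/(_ k): xx2; rewrite !mxE; lra.
Qed.

Lemma Npairs_units I J : Npairs I J ->
  let K := omul I J in
  [/\ omul I I = - oone R, omul J J = - oone R, omul K K = - oone R,
      omul I J + omul J I = 0 &
      [/\ ore I = 0, ore J = 0, ore K = 0,
          omul I K + omul K I = 0 & omul J K + omul K J = 0]].
Proof.
move=> [SI [SJ IJ]] K; case/SsphP: (SI) => I0 I1; case/SsphP: (SJ) => J0 J1.
have K0 : ore K = 0 by rewrite ore_omul I0 IJ mulr0 mul0r subr0.
have SK : Ssph K by apply/SsphP; rewrite odot_omul I1 J1 mulr1.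
have IK : odot I K = 0 by rewrite odot_omull J0 mulr0.
have JK : odot J K = 0 by rewrite odotC odot_omulr I0 mulr0.
by split=> //; [|split=> //]; rewrite omul_sym_im // ?IJ ?IK ?JK mulr0 scale0r oppr0.
Qed.

End OctonionAlgebra.

Section SliceGeometry.
Variable R : realType.
Implicit Types (I J : oct R) (v : 'cV[R]_4).

Definition im_part I J v : oct R := vc v i1 *: I + vc v i2 *: J + vc v i3 *: omul I J.

Definition im_sqnorm v : R := vc v i1 ^+ 2 + vc v i2 ^+ 2 + vc v i3 ^+ 2.

Lemma embE I J v : emb I J v = vc v i0 *: oone R + im_part I J v.
Proof. by rewrite /emb /im_part !addrA. Qed.

Lemma ore_im_part I J v : Npairs I J -> ore (im_part I J v) = 0.
Proof.
by case/Npairs_units=> _ _ _ _ [I0 J0 K0 _ _]; rewrite !oreD !oreZ I0 J0 K0 !mulr0 !addr0.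
Qed.

Lemma ore_emb I J v : Npairs I J -> ore (emb I J v) = vc v i0.
Proof. by move=> hN; rewrite embE oreD ore_im_part // oreZ ore_oone mulr1 addr0. Qed.

Lemma im_part_sqr I J v : Npairs I J ->
  omul (im_part I J v) (im_part I J v) = - im_sqnorm v *: oone R.
Proof.
case/Npairs_units=> II JJ KK IJ [_ _ _ IK JK].
have anti (x y : oct R) : omul x y + omul y x = 0 -> omul y x = - omul x y.
  by move=> xy; apply/eqP; rewrite -addr_eq0 addrC xy.
rewrite /im_part !(omulDl, omulDr, omulZl, omulZr) II JJ KK.
rewrite (anti _ _ IJ) (anti _ _ IK) (anti _ _ JK).
by apply/rowP => k; rewrite !mxE /im_sqnorm; ring.
Qed.

Lemma emb_OmegaD D I J v : Npairs I J -> Eset D v -> OmegaD D (emb I J v).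
Proof.
move=> hN Ev; set r := Num.sqrt (im_sqnorm v).
suff [K [SK uE]] : exists K, Ssph K /\ im_part I J v = r *: K.
  by exists (vc v i0), r, K; rewrite embE uE.
have q0 : 0 <= im_sqnorm v by rewrite /im_sqnorm !addr_ge0 ?sqr_ge0.
have [r0|rn0] := eqVneq r 0.
  exists I; split; first by case: hN.
  have : im_sqnorm v == 0 by rewrite eq_le q0 andbT -sqrtr_eq0 -/r r0.
  rewrite /im_sqnorm !paddr_eq0 ?addr_ge0 ?sqr_ge0 // !sqrf_eq0.
  by case/andP=> /andP[/eqP v1 /eqP v2] /eqP v3; rewrite r0 /im_part v1 v2 v3 !scale0r !addr0.
exists (r^-1 *: im_part I J v); split; last by rewrite scalerA mulfV // scale1r.
have qr : im_sqnorm v = r ^+ 2 by rewrite sqr_sqrtr.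
rewrite /Ssph /= omulZl omulZr scalerA im_part_sqr // qr scalerA -[RHS]scaleN1r.
by congr (_ *: _); field.
Qed.

Lemma OmegaD_emb D I J v : (forall a b, D (a, b) -> D (a, - b)) ->
  Npairs I J -> OmegaD D (emb I J v) -> Eset D v.
Proof.
move=> Dsym hN [a [b [K [Dab [SK]]]]]; case/SsphP: (SK) => K0 _.
move=> e; have va : vc v i0 = a.
  by rewrite -(ore_emb v hN) e oreD !oreZ ore_oone K0 mulr1 mulr0 addr0.
move: e; rewrite embE => e.
have ub : im_part I J v = b *: K by move: e; rewrite va => /addrI.
have qb : im_sqnorm v = b ^+ 2.
  have := im_part_sqr v hN; rewrite ub omulZl omulZr scalerA (SK : omul K K = _).
  rewrite scalerN -scaleNr => /(congr1 (@ore R)).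
  by rewrite !oreZ ore_oone !mulr1 expr2 => /oppr_inj.
rewrite /Eset /= -/(im_sqnorm v) va qb sqrtr_sqr.
by have [b0|b0] := leP 0 b; [rewrite ger0_norm | rewrite ltr0_norm //; apply: Dsym].
Qed.

End SliceGeometry.

Section LinearMatrixMaps.
Variable R : realType.

Lemma linear_mx_continuous m n (W : normedModType R) (L : {linear 'M[R]_(m, n) -> W}) :
  continuous L.
Proof.
have -> : (L : _ -> _) =
    \sum_(i < m) \sum_(j < n) (fun M : 'M[R]_(m, n) => M i j *: L (delta_mx i j)).
  apply/funext => M; rewrite !fct_sumE {1}(matrix_sum_delta M) linear_sum.
  by apply: eq_bigr => i _; rewrite fct_sumE linear_sum; apply: eq_bigr => j _; rewrite linearZ.
move=> M; apply: differentiable_continuous.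
apply: differentiable_sum => i; apply: differentiable_sum => j.
exact/differentiableZl/differentiable_coord.
Qed.

Lemma derive_linear_mx_comp m n (V W : normedModType R) (L : {linear 'M[R]_(m, n) -> W})
    (G : V -> 'M[R]_(m, n)) x e :
  differentiable G x -> 'D_e (L \o G) x = L ('D_e G x).
Proof.
move=> dG; have dL y : differentiable L y by apply/linear_differentiable/linear_mx_continuous.
rewrite deriveE; last exact: differentiable_comp.
by rewrite diff_comp // diff_lin ?deriveE //; apply: linear_mx_continuous.
Qed.

End LinearMatrixMaps.

Section SignReflections.
Variables (R : realType) (s1 s2 s3 : R).
Hypotheses (s1_sign : s1 ^+ 2 = 1) (s2_sign : s2 ^+ 2 = 1) (s3_sign : s3 ^+ 2 = 1).

Definition sg (a : 'I_4) : R := [:: 1; s1; s2; s3]`_a.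
Definition sign_mx : 'M[R]_4 := diag_mx (\row_a sg a).

Definition signed (d : 'I_4 -> 'I_4 -> oct R) a b : oct R := (sg a * sg b) *: d a b.

Lemma sg_sqr a : sg a ^+ 2 = 1.
Proof. by case: a => -[|[|[|[|//]]]] ?; rewrite /sg /= ?expr1n. Qed.

Lemma sign_mxE m (M : 'M[R]_(4, m)) i j : (sign_mx *m M) i j = sg i * M i j.
Proof. by rewrite mul_diag_mx !mxE. Qed.

Lemma row_sign_mx m b (M : 'M[R]_(4, m)) : row b (sign_mx *m M) = sg b *: row b M.
Proof. by apply/rowP => k; rewrite [LHS]mxE sign_mxE !mxE. Qed.

Lemma sign_mx_e4 a : sign_mx *m e4 R a = sg a *: e4 R a.
Proof.
apply/matrixP => i j; rewrite sign_mxE !mxE.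
by have [->|] := eqVneq i a; rewrite ?mulr0.
Qed.

Lemma sign_mx_O3 : isO3 sign_mx.
Proof.
split; last by rewrite sign_mx_e4 /sg /= scale1r.
rewrite tr_diag_mx mulmx_diag -diag_const_mx; congr diag_mx.
by apply/rowP => k; rewrite !mxE -expr2 sg_sqr.
Qed.

Lemma Eset_sign_mx D v : Eset D (sign_mx *m v) = Eset D v.
Proof.
have sq k : vc (sign_mx *m v) k ^+ 2 = vc v k ^+ 2 by rewrite /vc sign_mxE exprMn sg_sqr mul1r.
by rewrite /Eset /= !sq {1}/vc sign_mxE mul1r.
Qed.

End SignReflections.

Definition partials (R : realType) (G : 'cV[R]_4 -> 'M[R]_(4, 8)) v (a b : 'I_4) : oct R :=
  row b (pd a G v).

Section StemDerivatives.
Variables (R : realType) (D : set (R * R)) (G : 'cV[R]_4 -> 'M[R]_(4, 8)).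
Hypotheses (D_open : open D) (G_stem : stem_fun D G)
  (G_diff : forall w, Eset D w -> differentiable G w).

Lemma Eset_open : open (Eset D).
Proof.
have vc_cont (k : 'I_4) : continuous (fun v : 'cV[R]_4 => vc v k) := @coord_continuous R 4 1 k ord0.
have -> : Eset D =
    (fun v => (vc v i0, Num.sqrt (vc v i1 ^+ 2 + vc v i2 ^+ 2 + vc v i3 ^+ 2))) @^-1` D by [].
apply: open_comp D_open => v _.
apply: (cvg_pair (F := nbhs v) (G := nbhs _) (H := nbhs _)); first exact: vc_cont.
apply: continuous_comp; last exact: sqrt_continuous.
by do 2?apply: continuousD; apply: continuousM; apply: vc_cont.
Qed.

Lemma derive_stem A v e : isO3 A -> Eset D v ->
  'D_(A *m e) G (A *m v) = A *m 'D_e G v.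
Proof.
move=> A_O3 Ev.
have -> : 'D_(A *m e) G (A *m v) = 'D_e (G \o mulmx A) v.
  have shiftE : (fun h : R => h^-1 *: (((G \o mulmx A) \o shift v) (h *: e) - (G \o mulmx A) v)) =
                 (fun h => h^-1 *: ((G \o shift (A *m v)) (h *: (A *m e)) - G (A *m v))).
    by apply/funext => h /=; rewrite mulmxDr -scalemxAr.
  by rewrite /derive shiftE.
rewrite -(derive_linear_mx_comp (mulmx A) e (G_diff Ev)); apply: near_eq_derive.
by near=> w; apply: G_stem => //; near: w; apply: open_nbhs_nbhs; split; [exact: Eset_open|].
Unshelve. all: by end_near.
Qed.

Lemma partials_sign_mx s1 s2 s3 v :
  s1 ^+ 2 = 1 -> s2 ^+ 2 = 1 -> s3 ^+ 2 = 1 -> Eset D v ->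
  partials G (sign_mx s1 s2 s3 *m v) = signed s1 s2 s3 (partials G v).
Proof.
move=> s1_sign s2_sign s3_sign Ev; set B := sign_mx s1 s2 s3.
have EB : Eset D (B *m v) by rewrite Eset_sign_mx.
apply/funext => a; apply/funext => b.
have dB : pd a G (B *m v) = sg s1 s2 s3 a *: (B *m pd a G v).
  have := derive_stem (e4 R a) (sign_mx_O3 s1_sign s2_sign s3_sign) Ev.
  rewrite sign_mx_e4 (deriveE _ (G_diff EB)) [_ (_ *: e4 R a)]linearZ /=.
  rewrite -(deriveE _ (G_diff EB)) => <-.
  by rewrite scalerA -expr2 sg_sqr // scale1r.
by rewrite /partials /signed dB [row b _]linearZ /= row_sign_mx scalerA.
Qed.

End StemDerivatives.

Lemma sign_expansion_eq0 (K : realFieldType) n (g0 g1 g2 g3 h12 h13 h23 : 'rV[K]_n) :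
  (forall s1 s2 s3 : K, s1 ^+ 2 = 1 -> s2 ^+ 2 = 1 -> s3 ^+ 2 = 1 ->
     g0 + s1 *: g1 + s2 *: g2 + s3 *: g3
       + (s1 * s2) *: h12 + (s1 * s3) *: h13 + (s2 * s3) *: h23 = 0) ->
  [/\ g0 = 0, g1 = 0, g2 = 0, g3 = 0 & [/\ h12 = 0, h13 = 0 & h23 = 0]].
Proof.
have p : (1 : K) ^+ 2 = 1 by rewrite expr1n.
have m : (-1 : K) ^+ 2 = 1 by rewrite sqrrN expr1n.
move=> H; move: (H _ _ _ p p p) (H _ _ _ m p p) (H _ _ _ p m p) (H _ _ _ p p m)
  (H _ _ _ m m p) (H _ _ _ m p m) (H _ _ _ p m m) (H _ _ _ m m m).
move=> /rowP e1 /rowP e2 /rowP e3 /rowP e4 /rowP e5 /rowP e6 /rowP e7 /rowP e8.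
by split; [| | | |split]; apply/rowP => k;
  move: (e1 k) (e2 k) (e3 k) (e4 k) (e5 k) (e6 k) (e7 k) (e8 k); rewrite !mxE; lra.
Qed.

Section FueterAlgebra.
Variable R : realType.
Implicit Types (I J : oct R) (d : 'I_4 -> 'I_4 -> oct R).

Definition fueter_eqs d : Prop :=
  d i0 i0 - d i1 i1 - d i2 i2 - d i3 i3 = 0 /\
  d i1 i0 + d i0 i1 - d i3 i2 + d i2 i3 = 0 /\
  d i2 i0 + d i3 i1 + d i0 i2 - d i1 i3 = 0 /\
  d i3 i0 - d i2 i1 + d i1 i2 + d i0 i3 = 0.

Definition div_part d : oct R := d i0 i0 - d i1 i1 - d i2 i2 - d i3 i3.
Definition sym_part d a : oct R := d a i0 + d i0 a.
Definition curl_part d b c : oct R := d b c - d c b.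

Definition fueter_decoupled d : Prop :=
  [/\ div_part d = 0, sym_part d i1 = 0, sym_part d i2 = 0, sym_part d i3 = 0 &
      [/\ curl_part d i1 i2 = 0, curl_part d i1 i3 = 0 & curl_part d i2 i3 = 0]].

Lemma fueter_eqsE d : fueter_eqs d <->
  [/\ div_part d = 0, sym_part d i1 + curl_part d i2 i3 = 0,
      sym_part d i2 - curl_part d i1 i3 = 0 & sym_part d i3 + curl_part d i1 i2 = 0].
Proof.
rewrite /fueter_eqs /sym_part /curl_part.
have -> : d i1 i0 + d i0 i1 - d i3 i2 + d i2 i3 = d i1 i0 + d i0 i1 + (d i2 i3 - d i3 i2).
  by apply/rowP => k; rewrite !mxE; ring.
have -> : d i2 i0 + d i3 i1 + d i0 i2 - d i1 i3 = d i2 i0 + d i0 i2 - (d i1 i3 - d i3 i1).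
  by apply/rowP => k; rewrite !mxE; ring.
have -> : d i3 i0 - d i2 i1 + d i1 i2 + d i0 i3 = d i3 i0 + d i0 i3 + (d i1 i2 - d i2 i1).
  by apply/rowP => k; rewrite !mxE; ring.
by split=> [[? [? [? ?]]]|[? ? ? ?]].
Qed.

Section Signs.
Variables s1 s2 s3 : R.
Hypotheses (s1_sign : s1 ^+ 2 = 1) (s2_sign : s2 ^+ 2 = 1) (s3_sign : s3 ^+ 2 = 1).

Lemma div_part_signed d : div_part (signed s1 s2 s3 d) = div_part d.
Proof. by rewrite /div_part /signed /sg /= mul1r -!expr2 s1_sign s2_sign s3_sign !scale1r. Qed.

Lemma sym_part_signed d a : sym_part (signed s1 s2 s3 d) a = sg s1 s2 s3 a *: sym_part d a.
Proof. by rewrite /sym_part /signed [sg _ _ _ i0]/sg /= mulr1 mul1r scalerDr. Qed.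

Lemma curl_part_signed d b c :
  curl_part (signed s1 s2 s3 d) b c = (sg s1 s2 s3 b * sg s1 s2 s3 c) *: curl_part d b c.
Proof. by rewrite /curl_part /signed scalerBr [sg _ _ _ c * _]mulrC. Qed.

End Signs.

Lemma fueter_decoupled_eqs d : fueter_decoupled d -> fueter_eqs d.
Proof.
case=> D0 S1 S2 S3 [C12 C13 C23]; apply/fueter_eqsE.
by rewrite D0 S1 S2 S3 C12 C13 C23 !addr0 subr0.
Qed.

Lemma fueter_eqs_decoupled d :
  fueter_eqs d -> fueter_eqs (signed (-1) (-1) (-1) d) -> fueter_decoupled d.
Proof.
have m : (-1 : R) ^+ 2 = 1 by rewrite sqrrN expr1n.
rewrite !fueter_eqsE div_part_signed // !sym_part_signed // !curl_part_signed //= mulrNN mulr1.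
rewrite !scaleN1r !scale1r => -[D0 E1 E2 E3] [_ F1 F2 F3].
have split_eq0 (x y : oct R) : x + y = 0 -> - x + y = 0 -> x = 0 /\ y = 0.
  by move=> /rowP xy /rowP xy'; split; apply/rowP => k; move: (xy k) (xy' k); rewrite !mxE; lra.
have [S1 C23] := split_eq0 _ _ E1 F1.
have [S2 /eqP] := split_eq0 _ _ E2 F2; rewrite oppr_eq0 => /eqP C13.
have [S3 C12] := split_eq0 _ _ E3 F3.
by split.
Qed.

End FueterAlgebra.

Section SliceDirac.
Variable R : realType.
Implicit Types (I J : oct R) (d : 'I_4 -> 'I_4 -> oct R).

Definition slice_comb I J (x : 'I_4 -> oct R) : oct R :=
  x i0 + omul I (x i1) + omul J (x i2) + omul (omul I J) (x i3).

Definition dbar_jet I J d : oct R := slice_comb I J (fun a => slice_comb I J (d a)).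

Definition slice_mx I J (M : 'M[R]_(4, 8)) : oct R := slice_comb I J (fun b => row b M).

Lemma slice_mx_linear I J : linear (slice_mx I J).
Proof.
move=> k M N; rewrite /slice_mx /slice_comb !linearP /= !omulDr !omulZr.
by apply/rowP => j; rewrite !mxE; ring.
Qed.

HB.instance Definition _ I J :=
  GRing.isLinear.Build R 'M[R]_(4, 8) (oct R) *:%R (slice_mx I J) (slice_mx_linear I J).

Lemma DbarE D G f I J v : open D -> induces D G f -> Npairs I J ->
  Eset D v -> differentiable G v -> Dbar I J f v = dbar_jet I J (partials G v).
Proof.
move=> D_open hf hN Ev dG.
suff pdE a : pd a (fI I J f) v = slice_comb I J (partials G v a) by rewrite /Dbar !pdE.
rewrite /pd -[RHS]/(slice_mx I J (pd a G v)) -derive_linear_mx_comp //; apply: near_eq_derive.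
by near=> w; apply: hf => //; near: w; apply: open_nbhs_nbhs; split; [exact: Eset_open|].
Unshelve. all: by end_near.
Qed.

Lemma dbar_jet_decomp I J d : Npairs I J ->
  let K := omul I J in
  dbar_jet I J d = div_part d
    + omul I (sym_part d i1) + omul J (sym_part d i2) + omul K (sym_part d i3)
    + omul I (omul J (curl_part d i1 i2)) + omul I (omul K (curl_part d i1 i3))
    + omul J (omul K (curl_part d i2 i3)).
Proof.
case/Npairs_units => II JJ KK IJ [_ _ _ IK JK] K; rewrite {}/K.
rewrite /dbar_jet /slice_comb /div_part /sym_part /curl_part !(omulDr, omulNr).
(* Fully instantiated rules: matching a pattern such as [omul I (omul I _)] against
   the other products makes unification unfold [omul]. *)
rewrite (omul_unitK (d i1 i1) II) (omul_unitK (d i2 i2) JJ) (omul_unitK (d i3 i3) KK).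
rewrite (omul_anti (d i2 i1) IJ) (omul_anti (d i3 i1) IK) (omul_anti (d i3 i2) JK).
by apply/rowP => k; rewrite !mxE; ring.
Qed.

Lemma dbar_jet_eq0 I J d : Npairs I J -> fueter_decoupled d -> dbar_jet I J d = 0.
Proof.
move=> hN [D0 S1 S2 S3 [C12 C13 C23]].
by rewrite dbar_jet_decomp // D0 S1 S2 S3 C12 C13 C23 !omul0r !addr0.
Qed.

Lemma dbar_jet_signed I J d s1 s2 s3 :
  s1 ^+ 2 = 1 -> s2 ^+ 2 = 1 -> s3 ^+ 2 = 1 -> Npairs I J ->
  let K := omul I J in
  dbar_jet I J (signed s1 s2 s3 d) = div_part d + s1 *: omul I (sym_part d i1)
    + s2 *: omul J (sym_part d i2) + s3 *: omul K (sym_part d i3)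
    + (s1 * s2) *: omul I (omul J (curl_part d i1 i2))
    + (s1 * s3) *: omul I (omul K (curl_part d i1 i3))
    + (s2 * s3) *: omul J (omul K (curl_part d i2 i3)).
Proof.
move=> s1_sign s2_sign s3_sign hN K.
by rewrite dbar_jet_decomp // div_part_signed // !sym_part_signed // !curl_part_signed // !omulZr.
Qed.

Lemma signed_dbar_jet_decoupled I J d : Npairs I J ->
  (forall s1 s2 s3, s1 ^+ 2 = 1 -> s2 ^+ 2 = 1 -> s3 ^+ 2 = 1 ->
     dbar_jet I J (signed s1 s2 s3 d) = 0) ->
  fueter_decoupled d.
Proof.
move=> hN H; have [II JJ KK _ _] := Npairs_units hN.
have [D0 S1 S2 S3 [C12 C13 C23]] := sign_expansion_eq0 (fun s1 s2 s3 h1 h2 h3 =>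
  etrans (esym (dbar_jet_signed d h1 h2 h3 hN)) (H s1 s2 s3 h1 h2 h3)).
split=> //; [exact: omul_unit_inj II S1|exact: omul_unit_inj JJ S2|exact: omul_unit_inj KK S3|].
split; [exact/(omul_unit_inj JJ)/(omul_unit_inj II C12)
       |exact/(omul_unit_inj KK)/(omul_unit_inj II C13)
       |exact/(omul_unit_inj KK)/(omul_unit_inj JJ C23)].
Qed.

End SliceDirac.

Lemma exists_Npairs (R : realType) : exists I J : oct R, Npairs I J.
Proof.
exists (mko (mkq 0 1 0 0) 0), (mko (mkq 0 0 1 0) 0).
have c (a b c d : R) n : (n < 8)%N ->
    ocoord (mko (mkq a b c d) 0) n = [:: a; b; c; d; 0; 0; 0; 0]`_n.
  by case: n => [|[|[|[|[|[|[|[|//]]]]]]]] _; rewrite ocoord_mko //= ?qc_mkq ?qc0 ?inord4K.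
split; [apply/SsphP|split; [apply/SsphP|]];
  rewrite /ore ?odotE ?big_ord_recr ?big_ord0 /= !c //=; (try split); ring.
Qed.

Section SliceFueterRegularity.
Variables (R : realType) (D : set (R * R)).
Hypothesis D_open : open D.

Lemma fueter_system_decoupled G v : stem_fun D G -> (forall w, Eset D w -> differentiable G w) ->
  fueter_system D G -> Eset D v -> fueter_decoupled (partials G v).
Proof.
move=> hG dG hfu Ev; have m : (-1 : R) ^+ 2 = 1 by rewrite sqrrN expr1n.
apply: fueter_eqs_decoupled; first exact: hfu.
by rewrite -(partials_sign_mx D_open hG dG m m m Ev); apply: hfu; rewrite Eset_sign_mx.
Qed.

Lemma regular_Dbar_eq0 f I J : (forall a b, D (a, b) -> D (a, - b)) ->
  slice_fueter_regular D f -> Npairs I J ->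
  forall v, OmegaD D (emb I J v) -> Dbar I J f v = 0.
Proof.
move=> D_sym [G [hG [[dG _] [hf hfu]]]] hN v /(OmegaD_emb D_sym hN) Ev.
rewrite (DbarE D_open hf hN Ev (dG _ Ev)); apply: dbar_jet_eq0 hN _.
exact: fueter_system_decoupled hG dG hfu Ev.
Qed.

Lemma Dbar_eq0_fueter_system F f I J : stem_fun D F -> (forall w, Eset D w -> differentiable F w) ->
  induces D F f -> Npairs I J -> (forall v, OmegaD D (emb I J v) -> Dbar I J f v = 0) ->
  fueter_system D F.
Proof.
move=> hF dF hf hN HD v Ev; apply: (@fueter_decoupled_eqs _ (partials F v)).
apply: (signed_dbar_jet_decoupled hN) => s1 s2 s3 h1 h2 h3.
have EB : Eset D (sign_mx s1 s2 s3 *m v) by rewrite Eset_sign_mx.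
rewrite -(partials_sign_mx D_open hF dF h1 h2 h3 Ev) -(DbarE D_open hf hN EB (dF _ EB)).
by apply: HD; apply: emb_OmegaD.
Qed.

End SliceFueterRegularity.

Theorem mainTheorem9 (R : realType) (D : set (R * R))
  (D_open : open D) (D_ne : D !=set0)
  (D_sym : forall a b, D (a, b) -> D (a, - b))
  (Om_conn : connected (OmegaD D))
  (F : 'cV[R]_4 -> 'M[R]_(4, 8)) (f : oct R -> oct R)
  (hF : stem_fun D F) (hC1 : C1_on D F) (hf : induces D F f) :
  slice_fueter_regular D f <->
  exists I J : oct R, Npairs I J /\
    (forall v : 'cV[R]_4, OmegaD D (emb I J v) -> Dbar I J f v = 0).
Proof.
split=> [reg | [I [J [hN HD]]]].
  have [I [J hN]] := exists_Npairs R.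
  by exists I, J; split=> //; apply: regular_Dbar_eq0.
exists F; split=> //; split=> //; split=> //.
exact: Dbar_eq0_fueter_system hF hC1.1 hf hN HD.
Qed.
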